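(* Let $n,t\ge1$, $q\ge2$, $b\ge1$. Then \[ N_{q,b}^+(n,t)=q^{t(b-1)}\sum_{i=0}^{t-1}\binom{n+t}{i}(q-1)^i\big[1-(-1)^{t-i}\big]. \]
   Context: $\Sigma_q=\{0,\ldots,q-1\}$. A $b$-burst-insertion at position $i\in[1,n+1]$ transforms $x_1\cdots x_n$ into $x_1\cdots x_{i-1}y_1\cdots y_b x_i\cdots x_n$ for arbitrary $y_1\cdots y_b\in\Sigma_q^b$. $\mathcal{I}_{t,b}(\boldsymbol{x})$ is the set of all length-$(n+tb)$ sequences obtainable from $\boldsymbol{x}$ by $t$ successive $b$-burst-insertions. $N_{q,b}^+(n,t)=\max\{|\mathcal{I}_{t,b}(\boldsymbol{x})\cap\mathcal{I}_{t,b}(\boldsymbol{y})|:\boldsymbol{x}\ne\boldsymbol{y}\in\Sigma_q^n\}$. Convention: $\binom{m}{i}=0$ if $m<i$. *)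

From mathcomp Require Import all_boot all_order all_algebra.
Set Implicit Arguments. Unset Strict Implicit. Unset Printing Implicit Defensive.

(* Alphabet Sigma_q = 'I_q = {0,...,q-1}; words are seq 'I_q. *)

(* All results of one b-burst-insertion into x: for a position i in
   {0,...,size x} (paper's position i+1 in [1, n+1]) and any word w of
   length b, the word x_1..x_i w x_{i+1}..x_n. *)
Definition burst_ins (q b : nat) (x : seq 'I_q) : seq (seq 'I_q) :=
  flatten [seq [seq take i x ++ val w ++ drop i x | w : b.-tuple 'I_q]
          | i <- iota 0 (size x).+1].

Fixpoint ins_iter (q b t : nat) (x : seq 'I_q) : seq (seq 'I_q) :=
  match t with
  | 0 => [:: x]
  | t'.+1 => flatten [seq burst_ins b z | z <- ins_iter b t' x]
  end.

Definition Ibt (q b t n : nat) (x : n.-tuple 'I_q) : {set (n + t * b).-tuple 'I_q} :=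
  [set y : (n + t * b).-tuple 'I_q | val y \in ins_iter b t (val x)].

Definition Nplus (q b n t : nat) : nat :=
  \max_(x : n.-tuple 'I_q) \max_(y : n.-tuple 'I_q | y != x)
     #|Ibt b t x :&: Ibt b t y|.

From mathcomp Require Import all_boot all_order all_algebra.
From mathcomp Require Import zify ring.
Import GRing.Theory Num.Theory.
Set Implicit Arguments. Unset Strict Implicit. Unset Printing Implicit Defensive.

(* Whether z lies in I_{t,b}(x) is decided by reading x and z from the left: either
   their first letters are matched, or z begins with an inserted burst.  Sorting the
   words z of length n + tb by their first letter turns the sizes of balls and of their
   intersections into recursions in (t, n).  The ball I_{t,b}(x) has a size depending
   only on n.  For x = a x' and y = e y' with a <> e, a word starting with a lies in
   I_{t+1,b}(y) only if its first b letters form a burst, so at most q^(b-1) |I_{t,b}(y)|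
   such words are common to both balls (symmetrically for e), while a word starting with
   any other letter begins with a burst for both x and y; for a = e one recurses on the
   tails.  This bounds the intersection by a recursively defined quantity, attained by
   x = a u and y = e u, and solving its recursion gives the binomial sum. *)

Section BurstSupersequence.

Variables (q b : nat).

(* [burst_super t x z] decides z \in I_{t,b}(x), see [mem_ins_iter]. *)
Fixpoint burst_super (t : nat) (x z : seq 'I_q) {struct t} : bool :=
  let fix burst_super_t (x z : seq 'I_q) {struct x} : bool :=
    match x with
    | [::] => size z == t * b
    | a :: x' =>
        (if z is c :: z' then (c == a) && burst_super_t x' z' else false)
        || (if t is t'.+1 then (b <= size z) && burst_super t' (a :: x') (drop b z)
            else false)
    end
  in burst_super_t x z.

Lemma burst_super_nil t (z : seq 'I_q) : burst_super t [::] z = (size z == t * b).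
Proof. by case: t. Qed.

Lemma burst_super_cons t a (x z : seq 'I_q) :
  burst_super t (a :: x) z =
  (if z is c :: z' then (c == a) && burst_super t x z' else false)
  || (if t is t'.+1 then (b <= size z) && burst_super t' (a :: x) (drop b z) else false).
Proof. by case: t. Qed.

Lemma burst_super_match t a (x s : seq 'I_q) :
  burst_super t x s -> burst_super t (a :: x) (a :: s).
Proof. by move=> super_xs; rewrite burst_super_cons /= eqxx super_xs. Qed.

Lemma burst_super0 (x z : seq 'I_q) : burst_super 0 x z = (z == x).
Proof.
elim: x z => [|a x IHx] z; first by rewrite burst_super_nil mul0n size_eq0.
by rewrite burst_super_cons orbF; case: z => // c z; rewrite IHx eqseq_cons.
Qed.

Lemma burst_super_catl t (x z w : seq 'I_q) :
  size w = b -> burst_super t x z -> burst_super t.+1 x (w ++ z).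
Proof.
move=> sz_w; case: x => [|a x].
  by rewrite !burst_super_nil size_cat sz_w mulSn => /eqP ->.
move=> super_xz; rewrite burst_super_cons /= size_cat sz_w leq_addr.
by rewrite drop_size_cat // super_xz orbT.
Qed.

Lemma burst_super_ins t (x u v w : seq 'I_q) : size w = b ->
  burst_super t x (u ++ v) -> burst_super t.+1 x (u ++ w ++ v).
Proof.
move=> sz_w; elim: x => [|a x IHx] in t u v *.
  by rewrite !burst_super_nil !size_cat sz_w mulSn => /eqP; lia.
have ins_matched t' u' v' :
    (if u' ++ v' is c :: s then (c == a) && burst_super t' x s else false) ->
    burst_super t'.+1 (a :: x) (u' ++ w ++ v').
  case: u' => [|c u']; rewrite ?cat0s ?cat_cons; last first.
    by case/andP=> /eqP-> super_xs; exact/burst_super_match/IHx.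
  case: v' => // c v' /andP[/eqP-> super_xv].
  exact/burst_super_catl/burst_super_match.
elim: t => [|t IHt] in u v *; rewrite burst_super_cons => /orP[/ins_matched // | //].
case/andP=> le_b_uv super_drop; rewrite burst_super_cons; apply/orP; right.
apply/andP; split; first by rewrite !size_cat sz_w addnCA leq_addr.
have [lt_b_u | le_u_b] := ltnP b (size u).
  by move: super_drop; rewrite !drop_cat lt_b_u; apply: IHt.
set k := b - size u; have le_k_v : k <= size v by rewrite size_cat in le_b_uv; lia.
have drop_uwv : drop b (u ++ w ++ v) = drop k w ++ v.
  rewrite drop_cat (leq_gtF le_u_b) -/k drop_cat sz_w.
  case: ltnP => // le_b_k; have -> : k = b by lia.
  by rewrite subnn drop0 drop_oversize ?sz_w.
move: super_drop; rewrite drop_uwv drop_cat (leq_gtF le_u_b) -/k => super_drop.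
rewrite -(cat_take_drop k v) catA; apply: burst_super_catl super_drop.
by rewrite size_cat size_drop size_takel // sz_w; lia.
Qed.

Lemma burst_super_split t (x z : seq 'I_q) : burst_super t.+1 x z ->
  exists u v w, [/\ size w = b, z = u ++ w ++ v & burst_super t x (u ++ v)].
Proof.
have burst_front (z' : seq 'I_q) : b <= size z' ->
    exists u v w, [/\ size w = b, z' = u ++ w ++ v & u ++ v = drop b z'].
  by move=> le_bz; exists [::], (drop b z'), (take b z'); rewrite size_takel ?cat_take_drop.
elim: x z => [|a x IHx] z.
  rewrite !burst_super_nil mulSn => /eqP sz_z.
  have [|u [v [w [sz_w z_eq uv_eq]]]] := burst_front z; first by rewrite sz_z leq_addr.
  by exists u, v, w; rewrite uv_eq burst_super_nil size_drop sz_z addKn.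
rewrite burst_super_cons => /orP[].
  case: z => // c z /andP[/eqP-> /IHx [u [v [w [sz_w -> super_xuv]]]]].
  by exists (a :: u), v, w; split=> //; apply: burst_super_match.
case/andP=> /burst_front [u [v [w [sz_w -> uv_eq]]]] super_drop.
by exists u, v, w; rewrite uv_eq.
Qed.

Lemma burst_insP (y z : seq 'I_q) :
  reflect (exists u v w, [/\ size w = b, y = u ++ v & z = u ++ w ++ v])
          (z \in burst_ins b y).
Proof.
apply: (iffP flattenP) => [[s /mapP[i _ ->] /mapP[w _ z_eq]] | ].
  by exists (take i y), (drop i y), (val w); rewrite z_eq size_tuple cat_take_drop.
move=> [u [v [w [sz_w y_eq z_eq]]]].
have sz_w_eq : size w == b by rewrite sz_w.
subst y z.
exists [seq take (size u) (u ++ v) ++ val w0 ++ drop (size u) (u ++ v) | w0 : b.-tuple 'I_q].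
  by apply/mapP; exists (size u); rewrite // mem_iota size_cat ltnS leq_addr.
apply/mapP; exists (Tuple sz_w_eq); first by rewrite mem_enum.
by rewrite take_size_cat // drop_size_cat.
Qed.

Lemma mem_ins_iter t (x z : seq 'I_q) : (z \in ins_iter b t x) = burst_super t x z.
Proof.
elim: t z => [|t IHt] z; first by rewrite inE burst_super0.
apply/flattenP/idP => [[s /mapP[y y_in ->] /burst_insP[u [v [w [sz_w y_eq ->]]]]] | ].
  by apply: burst_super_ins; rewrite // -IHt -y_eq.
case/burst_super_split=> u [v [w [sz_w -> super_xuv]]].
exists (burst_ins b (u ++ v)); first by apply/mapP; exists (u ++ v); rewrite ?IHt.
by apply/burst_insP; exists u, v, w.
Qed.

Hypothesis b_gt0 : 0 < b.

Lemma burst_super_absorb t a (x u v : seq 'I_q) : size v = b.-1 ->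
  burst_super t (a :: x) u -> burst_super t.+1 x (v ++ u).
Proof.
have absorb_head t' (u' v' : seq 'I_q) : size v' = b.-1 ->
    (if u' is c :: s then (c == a) && burst_super t' x s else false) ->
    burst_super t'.+1 x (v' ++ u').
  move=> sz_v'; case: u' => // c s /andP[/eqP-> super_xs].
  by rewrite -cat_rcons; apply: burst_super_catl; rewrite // size_rcons sz_v' prednK.
elim: t => [|t IHt] in u v * => sz_v; rewrite burst_super_cons.
  by rewrite orbF; apply: absorb_head.
case/orP=> [/absorb_head -> // | /andP[le_bu super_drop]].
have u_eq : u = (take 1 u) ++ (drop 1 (take b u) ++ drop b u).
  by rewrite catA -(take_takel u b_gt0) !cat_take_drop.
rewrite u_eq catA; apply: burst_super_catl; last apply: IHt super_drop.
  by rewrite size_cat sz_v size_takel ?(leq_trans b_gt0) // addn1 prednK.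
by rewrite size_drop size_takel // subn1.
Qed.

Lemma burst_super_absorb_drop t a (x s : seq 'I_q) : b.-1 <= size s ->
  burst_super t (a :: x) (drop b.-1 s) -> burst_super t.+1 x s.
Proof.
move=> le_bs; rewrite -{2}(cat_take_drop b.-1 s).
by apply: burst_super_absorb; rewrite size_takel.
Qed.

Lemma burst_super_cons_same t a (x s : seq 'I_q) :
  burst_super t (a :: x) (a :: s) = burst_super t x s.
Proof.
apply/idP/idP=> [|/burst_super_match //].
rewrite burst_super_cons /= eqxx /= => /orP[// | ]; case: t => // t /andP[le_bs].
have -> : drop b (a :: s) = drop b.-1 s by rewrite -(prednK b_gt0).
by apply: burst_super_absorb_drop; rewrite -ltnS prednK.
Qed.

Lemma burst_super_cons_diff t a c (x s : seq 'I_q) : c != a ->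
  burst_super t (a :: x) (c :: s) =
  (if t is t'.+1 then (b <= (size s).+1) && burst_super t' (a :: x) (drop b.-1 s)
   else false).
Proof.
move=> neq_ca; rewrite burst_super_cons /= (negbTE neq_ca) /=.
by case: t => // t; rewrite -[in drop b _](prednK b_gt0).
Qed.

Lemma burst_super_cons_diffS t a c (x s : seq 'I_q) : c != a -> t.+1 * b <= size s ->
  burst_super t.+1 (a :: x) (c :: s) = burst_super t (a :: x) (drop b.-1 s).
Proof.
move=> neq_ca le_s.
by rewrite burst_super_cons_diff // (leq_trans (leq_pmull _ (ltn0Sn t)) (leqW le_s)).
Qed.

End BurstSupersequence.

Section CountingWords.

Variable q : nat.

Definition nwords m (P : pred (seq 'I_q)) : nat := \sum_(s : m.-tuple 'I_q) P s.

Lemma eq_nwords m (P Q : pred (seq 'I_q)) :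
  {in [pred s | size s == m], P =1 Q} -> nwords m P = nwords m Q.
Proof. by move=> eqPQ; apply: eq_bigr => s _; rewrite eqPQ // inE size_tuple. Qed.

Lemma leq_nwords m (P Q : pred (seq 'I_q)) :
  {in [pred s | size s == m], subpred P Q} -> nwords m P <= nwords m Q.
Proof.
move=> subPQ; apply: leq_sum => s _.
by case Ps: (P s); rewrite // subPQ // inE size_tuple.
Qed.

Lemma nwords_pred0 m : nwords m pred0 = 0.
Proof. exact: big1. Qed.

Lemma nwords_predT m : nwords m predT = q ^ m.
Proof. by rewrite /nwords sum_nat_const card_tuple card_ord muln1. Qed.

Lemma nwords_cons m (P : pred (seq 'I_q)) :
  nwords m.+1 P = \sum_(c : 'I_q) nwords m (fun s => P (c :: s)).
Proof.
rewrite /nwords pair_big /=.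
rewrite (reindex (fun p : 'I_q * m.-tuple 'I_q => [tuple of p.1 :: p.2])) //=.
exists (fun s : m.+1.-tuple 'I_q => (thead s, [tuple of behead s])) => [[c s] _ | s _] /=.
  by rewrite theadE; congr (_, _); apply: val_inj.
by rewrite [RHS]tuple_eta.
Qed.

Lemma nwords_drop k m (P : pred (seq 'I_q)) :
  nwords (k + m) (fun s => P (drop k s)) = q ^ k * nwords m P.
Proof.
elim: k P => [|k IHk] P; first by rewrite mul1n; apply: eq_nwords => s _; rewrite drop0.
rewrite addSn nwords_cons (eq_bigr (fun _ => q ^ k * nwords m P)) => [|c _]; last first.
  by rewrite -IHk.
by rewrite sum_nat_const card_ord expnS mulnA.
Qed.

Lemma bigD2 (R : Type) (idx : R) (op : Monoid.com_law idx) (a e : 'I_q)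
    (F : 'I_q -> R) : a != e ->
  \big[op/idx]_c F c =
  op (op (F a) (F e)) (\big[op/idx]_(c | (c != a) && (c != e)) F c).
Proof.
move=> neq_ae; rewrite (bigD1 a) // (bigD1 e) /= 1?eq_sym // Monoid.mulmA.
by congr (op _ _); apply: eq_bigl => c; rewrite andbC.
Qed.

Lemma sum_nat_const_neq (a : 'I_q) K : \sum_(c | c != a) K = (q - 1) * K.
Proof. by rewrite (sum_nat_const (predC1 a)) cardC1 card_ord subn1. Qed.

Lemma sum_nat_const_neq2 (a e : 'I_q) K : a != e ->
  \sum_(c | (c != a) && (c != e)) K = (q - 2) * K.
Proof.
move=> neq_ae; have := sum_nat_const_neq a K.
rewrite (bigD1 e) 1?eq_sym //= (eq_bigl (fun c => (c != a) && (c != e))) => [|c].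
  by rewrite -[2]/(1 + 1) subnDA => sum_eq; rewrite mulnBl mul1n -sum_eq addKn.
by rewrite andbC.
Qed.

End CountingWords.

Section InsertionBall.

Variables (q b : nat).
Hypothesis b_gt0 : 0 < b.

(* |I_{t,b}(x)| for |x| = n, see [nwords_burst_super]. *)
Fixpoint ins_card (t : nat) : nat -> nat :=
  fix ins_card_t n :=
    match n with
    | 0 => q ^ (t * b)
    | n'.+1 => if t is t'.+1 then ins_card_t n' + (q - 1) * q ^ b.-1 * ins_card t' n'.+1
               else 1
    end.

Lemma ins_card0 n : ins_card 0 n = 1.
Proof. by case: n. Qed.

Lemma ins_card_nil t : ins_card t 0 = q ^ (t * b).
Proof. by case: t. Qed.

Lemma ins_cardSS t n :
  ins_card t.+1 n.+1 = ins_card t.+1 n + (q - 1) * q ^ b.-1 * ins_card t n.+1.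
Proof. by []. Qed.

Lemma nwords_drop_burst n t (P : pred (seq 'I_q)) :
  nwords (n + t.+1 * b) (fun s => P (drop b.-1 s)) = q ^ b.-1 * nwords (n.+1 + t * b) P.
Proof.
have -> : n + t.+1 * b = b.-1 + (n.+1 + t * b) by rewrite mulSn; lia.
exact: nwords_drop.
Qed.

Lemma nwords_burst_super t (x : seq 'I_q) :
  nwords (size x + t * b) (burst_super b t x) = ins_card t (size x).
Proof.
have nil_case t' : nwords (t' * b) (burst_super b t' ([::] : seq 'I_q)) = ins_card t' 0.
  by rewrite ins_card_nil -nwords_predT; apply: eq_nwords => s; rewrite inE burst_super_nil.
elim: t => [|t IHt] in x *; (elim: x => [|a x IHx]; first exact: nil_case).
- rewrite ins_card0 [size _]/= addSn nwords_cons (bigD1 a) // -[RHS]addn0; congr (_ + _).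
    rewrite -(ins_card0 (size x)) -IHx.
    by apply: eq_nwords => s _; rewrite burst_super_cons_same.
  rewrite big1 // => c neq_ca; rewrite (eq_nwords (Q := pred0)) ?nwords_pred0 // => s _.
  by rewrite burst_super_cons_diff.
- rewrite [size _]/= addSn nwords_cons (bigD1 a) // ins_cardSS; congr (_ + _).
    by rewrite -IHx; apply: eq_nwords => s _; rewrite burst_super_cons_same.
  rewrite -mulnA -(sum_nat_const_neq a); apply: eq_bigr => c neq_ca.
  rewrite -[ins_card t _](IHt (a :: x)) -nwords_drop_burst.
  apply: eq_nwords => s; rewrite inE => /eqP sz_s.
  by rewrite burst_super_cons_diffS // sz_s leq_addl.
Qed.

Lemma nwords_burst_super_drop t e (y : seq 'I_q) :
  nwords (size y + t.+1 * b) (fun s => burst_super b t (e :: y) (drop b.-1 s)) =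
  q ^ b.-1 * ins_card t (size y).+1.
Proof. by rewrite nwords_drop_burst -(nwords_burst_super _ (e :: y)). Qed.

End InsertionBall.

Section InsertionOverlap.

Variables (q b : nat).
Hypothesis b_gt0 : 0 < b.

Definition ins_common t (x y : seq 'I_q) : nat :=
  nwords (size x + t * b) (fun s => burst_super b t x s && burst_super b t y s).

(* N^+_{q,b}(n,t), see [Nplus_ins_overlap]. *)
Fixpoint ins_overlap t n : nat :=
  if t is t'.+1 then
    2 * q ^ b.-1 * ins_card q b t' n + (q - 2) * q ^ b.-1 * ins_overlap t' n
  else 0.

Lemma ins_overlapS t n :
  ins_overlap t.+1 n =
  2 * q ^ b.-1 * ins_card q b t n + (q - 2) * q ^ b.-1 * ins_overlap t n.
Proof. by []. Qed.

Lemma ins_overlapSS t n :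
  ins_overlap t.+1 n.+1 = ins_overlap t.+1 n + (q - 1) * q ^ b.-1 * ins_overlap t n.+1.
Proof.
elim: t n => [|t IHt] n; first by rewrite !ins_overlapS !ins_card0 /= !muln0 !addn0.
rewrite [LHS]ins_overlapS [ins_overlap t.+2 n]ins_overlapS ins_cardSS [in LHS]IHt.
by rewrite [ins_overlap t.+1 n.+1]ins_overlapS; ring.
Qed.

Lemma ins_common0 (x y : seq 'I_q) : x != y -> ins_common 0 x y = 0.
Proof.
move=> neq_xy; rewrite /ins_common (eq_nwords (Q := pred0)) ?nwords_pred0 // => s _.
rewrite !burst_super0; apply/negP=> /andP[/eqP-> /eqP eq_xy].
by rewrite eq_xy eqxx in neq_xy.
Qed.

Lemma ins_common_cons_same t a (x y : seq 'I_q) : size x = size y ->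
  ins_common t.+1 (a :: x) (a :: y) =
  ins_common t.+1 x y + (q - 1) * q ^ b.-1 * ins_common t (a :: x) (a :: y).
Proof.
move=> sz_xy; rewrite /ins_common [size _]/= addSn nwords_cons (bigD1 a) //; congr (_ + _).
  by apply: eq_nwords => s _; rewrite !burst_super_cons_same.
rewrite -mulnA -(sum_nat_const_neq a) -nwords_drop_burst //.
apply: eq_bigr => c neq_ca; apply: eq_nwords => s; rewrite inE => /eqP sz_s.
by rewrite !burst_super_cons_diffS // sz_s ?sz_xy leq_addl.
Qed.

Lemma ins_common_cons_diff t a e (x y : seq 'I_q) : a != e -> size x = size y ->
  ins_common t.+1 (a :: x) (e :: y) =
    nwords (size x + t.+1 * b)
      (fun s => burst_super b t.+1 x s && burst_super b t (e :: y) (drop b.-1 s))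
  + nwords (size x + t.+1 * b)
      (fun s => burst_super b t (a :: x) (drop b.-1 s) && burst_super b t.+1 y s)
  + (q - 2) * q ^ b.-1 * ins_common t (a :: x) (e :: y).
Proof.
move=> neq_ae sz_xy; rewrite /ins_common [size _]/= addSn nwords_cons (bigD2 _ _ neq_ae).
have le_tb_s (s : seq 'I_q) : s \in [pred s | size s == size x + t.+1 * b] ->
    t.+1 * b <= size s.
  by rewrite inE => /eqP->; rewrite leq_addl.
congr (_ + _ + _).
- apply: eq_nwords => s /le_tb_s le_s.
  by rewrite burst_super_cons_same // (burst_super_cons_diffS b_gt0).
- apply: eq_nwords => s /le_tb_s le_s.
  by rewrite burst_super_cons_same // (burst_super_cons_diffS b_gt0) // eq_sym.
rewrite -mulnA -(sum_nat_const_neq2 _ neq_ae) -nwords_drop_burst //.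
apply: eq_bigr => c /andP[neq_ca neq_ce]; apply: eq_nwords => s /le_tb_s le_s.
by rewrite !(burst_super_cons_diffS b_gt0) // 1?eq_sym.
Qed.

Lemma ins_common_le t (x y : seq 'I_q) : size x = size y -> x != y ->
  ins_common t x y <= ins_overlap t (size x).
Proof.
elim: t => [|t IHt] in x y * => [_ /ins_common0 -> // | ].
elim: x y => [|a x IHx] [|e y] // [sz_xy] neq_xy.
have [eq_ae | neq_ae] := eqVneq a e.
  subst e; have neq_xy' : x != y by apply: contraNneq neq_xy => ->.
  have IHt_ax : ins_common t (a :: x) (a :: y) <= ins_overlap t (size x).+1.
    by apply: IHt; rewrite //= sz_xy.
  rewrite ins_common_cons_same // [size _]/= ins_overlapSS.
  by rewrite leq_add ?leq_mul ?IHx.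
have IHt_ax : ins_common t (a :: x) (e :: y) <= ins_overlap t (size x).+1.
  by apply: IHt; rewrite //= sz_xy.
rewrite ins_common_cons_diff // [size (a :: x)]/= ins_overlapS.
rewrite -[2 * _ * _]mulnA mul2n -addnn !leq_add ?leq_mul //.
- rewrite sz_xy -(nwords_burst_super_drop b_gt0 t e y).
  by apply: leq_nwords => s _ /andP[_ ->].
- rewrite -(nwords_burst_super_drop b_gt0 t a x).
  by apply: leq_nwords => s _ /andP[-> _].
Qed.

Lemma ins_common_adjacent t a e (u : seq 'I_q) : a != e ->
  ins_common t (a :: u) (e :: u) = ins_overlap t (size u).+1.
Proof.
move=> neq_ae; elim: t => [|t IHt].
  by rewrite ins_common0 //; apply: contraNneq neq_ae => -[->].
rewrite ins_common_cons_diff // ins_overlapS IHt -[2 * _ * _]mulnA mul2n -addnn.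
have absorbed (c : 'I_q) s : size s = size u + t.+1 * b ->
    burst_super b t (c :: u) (drop b.-1 s) -> burst_super b t.+1 u s.
  move=> sz_s; apply: burst_super_absorb_drop => //.
  by rewrite sz_s mulSn; lia.
congr (_ + _ + _).
- rewrite -(nwords_burst_super_drop b_gt0 t e u).
  apply: eq_nwords => s; rewrite inE => /eqP sz_s.
  by apply/andP/idP => [[] // | super_drop]; split=> //; apply: absorbed super_drop.
- rewrite -(nwords_burst_super_drop b_gt0 t a u).
  apply: eq_nwords => s; rewrite inE => /eqP sz_s.
  by apply/andP/idP => [[] // | super_drop]; split=> //; apply: absorbed super_drop.
Qed.

End InsertionOverlap.

Lemma card_Ibt_cap q b t n (x y : n.-tuple 'I_q) :
  #|Ibt b t x :&: Ibt b t y| = ins_common b t x y.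
Proof.
rewrite /ins_common size_tuple -sum1_card /nwords big_mkcond; apply: eq_bigr => s _.
by rewrite !inE !mem_ins_iter; case: (_ && _).
Qed.

Lemma Nplus_ins_overlap q b n t : 0 < n -> 1 < q -> 0 < b ->
  Nplus q b n t = ins_overlap q b t n.
Proof.
move=> n_gt0 q_gt1 b_gt0; apply/eqP; rewrite eqn_leq; apply/andP; split.
  apply/bigmax_leqP => x _; apply/bigmax_leqP => y neq_yx.
  have := ins_common_le b_gt0 t (etrans (size_tuple x) (esym (size_tuple y))).
  by rewrite card_Ibt_cap size_tuple; apply; rewrite eq_sym.
pose a : 'I_q := Ordinal (ltnW q_gt1); pose e : 'I_q := Ordinal q_gt1.
have neq_ae : a != e by [].
have sz_a : size (a :: nseq n.-1 a) == n by rewrite /= size_nseq prednK.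
have sz_e : size (e :: nseq n.-1 a) == n by rewrite /= size_nseq prednK.
pose x := Tuple sz_a; pose y := Tuple sz_e.
have neq_yx : y != x.
  by apply: contraNneq neq_ae => /(congr1 (fun z : n.-tuple _ => head a z)) /= ->.
rewrite /Nplus; apply: leq_trans (leq_bigmax x).
apply: leq_trans (leq_bigmax_cond y neq_yx).
by rewrite card_Ibt_cap ins_common_adjacent // size_nseq prednK.
Qed.

Local Open Scope ring_scope.

Lemma PoszX (m k : nat) : (m ^ k)%:Z = m%:Z ^+ k.
Proof. by elim: k => [|k IHk] //; rewrite expnS exprS PoszM IHk. Qed.

Definition Nplus_sum (q n t : nat) : int :=
  \sum_(i < t) ('C(n + t, i) * (q - 1) ^ i)%:Z * (1 - (-1) ^+ (t - i)).

Lemma Nplus_sum0 q n : Nplus_sum q n 0 = 0.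
Proof. by rewrite /Nplus_sum big_ord0. Qed.

Lemma Nplus_sumS q n t :
  Nplus_sum q n.+1 t.+1 = Nplus_sum q n t.+1 + (q - 1)%:Z * Nplus_sum q n.+1 t.
Proof.
rewrite /Nplus_sum big_ord_recl [in X in _ = X + _]big_ord_recl -addrA !bin0.
congr (_ + _); rewrite mulr_sumr -big_split /=; apply: eq_bigr => i _.
rewrite /bump /= !add1n subSS addSn addnS binS !PoszM PoszD !PoszX mulrDl mulrDl.
by congr (_ + _); rewrite !exprS; ring.
Qed.

Lemma Nplus_sum_nil q t : (1 < q)%N -> Nplus_sum q 0 t = q%:Z ^+ t - (q - 2)%:Z ^+ t.
Proof.
move=> q_gt1.
have -> : q%:Z = 1 + (q - 1)%:Z by rewrite -subzn ?(ltnW q_gt1) //; ring.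
have -> : (q - 2)%:Z = -1 + (q - 1)%:Z by rewrite -!subzn ?(ltnW q_gt1) //; ring.
rewrite !exprDn -sumrB big_ord_recr /= subnn expr0 !binn /= subrr addr0.
apply: eq_bigr => i _; rewrite add0n expr1n mul1r PoszM PoszX.
ring.
Qed.

Lemma ins_overlap_closed q b t n : (0 < b)%N -> (1 < q)%N ->
  (ins_overlap q b t n)%:Z = (q ^ (t * (b - 1)))%:Z * Nplus_sum q n t.
Proof.
move=> b_gt0 q_gt1; elim: t n => [|t IHt] n; first by rewrite Nplus_sum0 mulr0.
rewrite subn1 in IHt *; elim: n => [|n IHn]; last first.
  rewrite ins_overlapSS PoszD !PoszM IHn IHt Nplus_sumS !PoszX mulSn exprD.
  ring.
rewrite ins_overlapS ins_card_nil PoszD !PoszM IHt !Nplus_sum_nil // !PoszX.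
have -> : (t * b = t * b.-1 + t)%N by rewrite -{1}(prednK b_gt0) mulnS addnC.
rewrite mulSn !exprD !(exprS _ t) -subzn ?(ltnW q_gt1) //.
ring.
Qed.

Theorem theorem3p3 (n t q b : nat) :
  (1 <= n)%N -> (1 <= t)%N -> (2 <= q)%N -> (1 <= b)%N ->
  (Nplus q b n t)%:Z =
    (q ^ (t * (b - 1)))%:Z *
    \sum_(i < t) ('C(n + t, i) * (q - 1) ^ i)%:Z * (1 - (-1) ^+ (t - i)).
Proof.
move=> n_gt0 _ q_gt1 b_gt0.
by rewrite Nplus_ins_overlap // ins_overlap_closed.
Qed.
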